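(* Every set star Lindelöf space of cardinality less than $\mathfrak d$ is set star Menger.
   Context: For a family $\mathcal U$ of subsets of $X$ and $A\subseteq X$, $st(A,\mathcal U)=\bigcup\{U\in\mathcal U: U\cap A\neq\emptyset\}$. $X$ is set star Lindelöf if for every nonempty $A\subseteq X$ and every family $\mathcal U$ of open subsets of $X$ with $\overline A\subseteq\bigcup\mathcal U$ there is a countable $\mathcal V\subseteq\mathcal U$ with $A\subseteq st(\bigcup\mathcal V,\mathcal U)$. $X$ is set star Menger if for every nonempty $A\subseteq X$ and every sequence $(\mathcal U_n:n\in\omega)$ of families of open sets with $\overline A\subseteq\bigcup\mathcal U_n$ for all $n$, there are finite $\mathcal V_n\subseteq\mathcal U_n$ with $A\subseteq\bigcup_n st(\bigcup\mathcal V_n,\mathcal U_n)$. $\mathfrak d$ is the minimal cardinality of a cofinal subset of $(\omega^\omega,\leq^* )$, where $f\leq^* g$ means $f(n)\leq g(n)$ for all but finitely many $n$. *)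

From HB Require Import structures.
From mathcomp Require Import all_boot all_order all_algebra.
From mathcomp Require Import all_classical all_reals all_analysis.
Set Implicit Arguments. Unset Strict Implicit. Unset Printing Implicit Defensive.
Local Open Scope classical_set_scope.

Definition star {T : Type} (A : set T) (U : set (set T)) : set T :=
  \bigcup_(V in [set V | U V /\ V `&` A !=set0]) V.

Definition open_family {T : topologicalType} (U : set (set T)) : Prop :=
  forall V, U V -> open V.

Definition set_star_Lindelof (T : topologicalType) : Prop :=
  forall (A : set T) (U : set (set T)),
    A !=set0 -> open_family U -> closure A `<=` \bigcup_(V in U) V ->
    exists W : set (set T), W `<=` U /\ countable W /\
      A `<=` star (\bigcup_(V in W) V) U.

Definition set_star_Menger (T : topologicalType) : Prop :=
  forall (A : set T) (U : nat -> set (set T)),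
    A !=set0 -> (forall n, open_family (U n)) ->
    (forall n, closure A `<=` \bigcup_(V in U n) V) ->
    exists W : nat -> set (set T),
      (forall n, W n `<=` U n /\ finite_set (W n)) /\
      A `<=` \bigcup_n star (\bigcup_(V in W n) V) (U n).

Definition le_star (f g : nat -> nat) : Prop :=
  exists N, forall n, (N <= n)%N -> (f n <= g n)%N.

Definition dominating (D : set (nat -> nat)) : Prop :=
  forall g, exists2 f, D f & le_star g f.

(* |X| < d  iff  not (d <= |X|), i.e. no dominating family D with |D| <= |X|
   (d being the least cardinality of a dominating family). *)
Definition card_lt_dominating (T : Type) : Prop :=
  ~ exists D : set (nat -> nat), dominating D /\ (D #<= [set: T])%card.

From mathcomp Require Import all_boot all_order all_algebra.
From mathcomp Require Import all_classical all_reals all_analysis.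

Set Implicit Arguments.
Unset Strict Implicit.

Local Open Scope classical_set_scope.

(* For each n, set star Lindelöf gives a countable W_n <= U_n with
   A <= st(\bigcup W_n, U_n).  Writing W_n as an increasing union of finite
   families W_n,k, each x in A lies in st(\bigcup W_n,k, U_n) from some stage
   k = f_x(n) on.  The at most |X| < d functions f_x are not dominating, so a
   single g satisfies f_x(n) < g(n) for some n, for every x; the finite
   families W_n,g(n) then witness set star Menger. *)

Lemma star_mono (T : Type) (U : set (set T)) (B C : set T) :
  B `<=` C -> star B U `<=` star C U.
Proof.
move=> BC x [V [UV [y [Vy By]]] Vx]; exists V => //; split => //.
by exists y; split => //; apply: BC.
Qed.

Lemma star_bigcup_exhaustion (T : Type) (U W : set (set T))
    (E : nat -> set (set T)) :
  W `<=` \bigcup_k E k ->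
  star (\bigcup_(V in W) V) U `<=` \bigcup_k star (\bigcup_(V in E k) V) U.
Proof.
move=> WE x [V0 [UV0 [y [V0y [V WV Vy]]]] V0x].
have [k _ EkV] := WE V WV.
by exists k => //; exists V0 => //; split => //; exists y; split => //; exists V.
Qed.

Lemma countable_finite_exhaustion (X : Type) (W : set X) : countable W ->
  exists E : nat -> set X,
    [/\ forall k, E k `<=` W /\ finite_set (E k),
        forall k l, (k <= l)%N -> E k `<=` E l
      & W `<=` \bigcup_k E k].
Proof.
move=> /countable_injP [i i_inj].
exists (fun k => W `&` i @^-1` `I_k.+1); split.
- move=> k; split=> [V [] //|].
  have Ek_inj : {in W `&` i @^-1` `I_k.+1 &, injective i}.
    by move=> a b /set_mem[Wa _] /set_mem[Wb _]; apply: i_inj; rewrite inE.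
  have /card_eqPle [_ Ek_le] := inj_card_eq Ek_inj.
  apply: card_le_finite Ek_le (sub_finite_set _ (finite_II k.+1)).
  by move=> _ [V [_ ik] <-].
- by move=> k l kl V [WV ik]; split=> //=; apply: leq_trans ik _.
- by move=> V WV; exists (i V) => //; split => //=.
Qed.

Lemma set_star_Lindelof_finite_exhaustion (T : topologicalType) (A : set T)
    (U : set (set T)) :
  set_star_Lindelof T -> A !=set0 -> open_family U ->
  closure A `<=` \bigcup_(V in U) V ->
  exists E : nat -> set (set T),
    [/\ forall k, E k `<=` U /\ finite_set (E k),
        forall k l, (k <= l)%N -> E k `<=` E l
      & A `<=` \bigcup_k star (\bigcup_(V in E k) V) U].
Proof.
move=> lindelof A0 U_open U_cover.
have [W [WU [W_countable AW]]] := lindelof A U A0 U_open U_cover.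
have [E [E_fin E_mono W_E]] := countable_finite_exhaustion W_countable.
exists E; split=> // [k|]; first by have [EW ?] := E_fin k; split=> // V /EW /WU.
by move=> x /AW; apply: star_bigcup_exhaustion.
Qed.

Lemma card_lt_dominating_exceeds (T : Type) (F : T -> nat -> nat) :
  card_lt_dominating T -> exists g : nat -> nat, forall x, exists n, (F x n < g n)%N.
Proof.
move=> small; apply: contrapT => no_g; apply: small.
exists (range F); split; last exact: card_image_le.
move=> g; apply: contrapT => g_undominated; apply: no_g; exists g => x.
apply: contrapT => Fx_ge; apply: g_undominated; exists (F x); first by exists x.
by exists 0%N => n _; rewrite leqNgt; apply/negP => gF; apply: Fx_ge; exists n.
Qed.

Theorem proposition2p5 (T : topologicalType) :
  set_star_Lindelof T -> card_lt_dominating T -> set_star_Menger T.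
Proof.
move=> lindelof small A U A0 U_open U_cover.
have /choice [E E_spec] := fun n =>
  set_star_Lindelof_finite_exhaustion lindelof A0 (U_open n) (U_cover n).
pose caught n k := star (\bigcup_(V in E n k) V) (U n).
have /choice [F F_spec] : forall x, exists Fx : nat -> nat, forall n,
    (exists k, caught n k x) -> caught n (Fx n) x.
  move=> x; have /choice [Fx Fx_spec] : forall n, exists k,
      (exists k, caught n k x) -> caught n k x.
    move=> n; have [[k ?]|no_k] := pselect (exists k, caught n k x).
      by exists k.
    by exists 0%N => /no_k.
  by exists Fx.
have [g g_beats] := card_lt_dominating_exceeds F small.
exists (fun n => E n (g n)); split=> [n|x Ax]; first by have [] := E_spec n.
have [n Fg] := g_beats x; have [_ E_mono A_caught] := E_spec n.
have E_sub : \bigcup_(V in E n (F x n)) V `<=` \bigcup_(V in E n (g n)) V.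
  exact/bigcup_subset/E_mono/ltnW.
exists n => //; apply: (star_mono E_sub).
by apply: F_spec; have [k _] := A_caught x Ax; exists k.
Qed.
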